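(* Fix integers $N\ge 2$ and $K\ge 1$. For any Boolean tensor $\mathcal{B}\in\{0,1\}^{N\times N\times K}$ with frontal slices $\mathbf{B}_1,\dots,\mathbf{B}_K$, and any $r\in\mathbb{N}^+$ with \[ r\ge\min\Big\{KN,\;2\sum_{k=1}^K\mathrm{rrank}(\mathbf{B}_k)\Big\},\] the set $\pi(\mathcal{M}^{\text{ComplEx}}_r)$ contains a ranking tensor consistent with $\mathcal{B}$.
   Context: A score-based model assigns a score $s_k(i,j)\in\mathbb{R}$ to each triple, $i,j\in\{1,\dots,N\}$, $k\in\{1,\dots,K\}$; its scoring tensor has frontal slices $\mathbf{S}_k$ with $[\mathbf{S}_k]_{ij}=s_k(i,j)$. For a real $N\times N$ matrix $\mathbf{S}$, $\pi(\mathbf{S})$ is the matrix of dense ranks: $\pi_{ij}(\mathbf{S})=1+$ (number of distinct values among entries of $\mathbf{S}$ strictly larger than $s_{ij}$). For tensors, $\pi$ acts slicewise; for a set $X$, $\pi(X)=\{\pi(x):x\in X\}$. ComplEx of size $r$: parameters $\mathbf{A}\in\mathbb{C}^{N\times r}$ (rows $\mathbf{a}_i$), $\mathbf{R}\in\mathbb{C}^{K\times r}$ (rows $\mathbf{r}_k$), score $\mathrm{Re}(\mathbf{a}_i^T\mathrm{diag}(\mathbf{r}_k)\overline{\mathbf{a}_j})$; $\mathcal{M}^{\text{ComplEx}}_r$ is the set of scoring tensors of such models. A ranking tensor $\mathcal{P}$ is consistent with $\mathcal{B}$ if for every $k$ and all $i,j,i',j'$: $b_{ijk}=1$ and $b_{i'j'k}=0$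 imply $p_{ijk}<p_{i'j'k}$. Rounding rank: $\mathrm{round}$ maps each entry $x$ of a real matrix to $1$ if $x\ge 1/2$ and to $0$ otherwise; for $\mathbf{B}\in\{0,1\}^{m\times n}$, $\mathrm{rrank}(\mathbf{B})=\min\{\mathrm{rank}(\mathbf{A}):\mathbf{A}\in\mathbb{R}^{m\times n},\ \mathrm{round}(\mathbf{A})=\mathbf{B}\}$. *)

From HB Require Import structures.
From mathcomp Require Import all_boot all_order all_algebra.
From mathcomp Require Import boolp reals.
From mathcomp Require Import complex.
Set Implicit Arguments. Unset Strict Implicit. Unset Printing Implicit Defensive.
Import Order.TTheory GRing.Theory Num.Theory.
Local Open Scope ring_scope.

Definition dense_rank (R : realType) (N : nat) (S : 'M[R]_N) (i j : 'I_N) : nat :=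
  (size (undup [seq S p.1 p.2 | p <- enum [set: 'I_N * 'I_N]
                 & S i j < S p.1 p.2])).+1.

Definition pi_tensor (R : realType) (N K : nat) (S : 'I_K -> 'M[R]_N)
  : 'I_K -> 'I_N -> 'I_N -> nat :=
  fun k i j => dense_rank (S k) i j.

(* Score tensor of a ComplEx model with entity embeddings A (rows a_i) and
   relation embeddings Rm (rows r_k):  s_k(i,j) = Re(a_i^T diag(r_k) conj(a_j)). *)
Definition complex_score (R : realType) (N K r : nat)
  (A : 'M[R[i]]_(N, r)) (Rm : 'M[R[i]]_(K, r)) : 'I_K -> 'M[R]_N :=
  fun k => \matrix_(i < N, j < N)
     complex.Re (\sum_(l < r) A i l * Rm k l * conjc (A j l)).

Definition consistent (N K : nat) (P : 'I_K -> 'I_N -> 'I_N -> nat)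
  (B : 'I_K -> 'M[bool]_N) : Prop :=
  forall (k : 'I_K) (i j i' j' : 'I_N),
    B k i j -> ~~ B k i' j' -> (P k i j < P k i' j')%N.

Definition round_mx (R : realType) (m n : nat) (A : 'M[R]_(m, n)) : 'M[bool]_(m, n) :=
  map_mx (fun x => (1 / 2 <= x)) A.

Definition rrank_pred (R : realType) (m n : nat) (B : 'M[bool]_(m, n)) : pred nat :=
  fun k => `[< exists A : 'M[R]_(m, n), \rank A = k /\ round_mx A = B >].

Lemma rrank_ex (R : realType) (m n : nat) (B : 'M[bool]_(m, n)) :
  exists k, rrank_pred R B k.
Proof.
exists (\rank (map_mx (fun b : bool => (b : nat)%:R : R) B)).
apply/asboolP; eexists; split; first reflexivity.
apply/matrixP => i j; rewrite !mxE.
case: (B i j) => /=.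
- by rewrite ler_pdivrMr // mul1r ler1n.
- by apply/negbTE; rewrite -ltNge divr_gt0.
Qed.

Definition rrank (R : realType) (m n : nat) (B : 'M[bool]_(m, n)) : nat :=
  ex_minn (rrank_ex R B).

From HB Require Import structures.
From mathcomp Require Import all_boot all_order all_algebra.
From mathcomp Require Import boolp reals.
From mathcomp Require Import complex.
From mathcomp Require Import spectral.
From mathcomp Require Import ring.
Import Order.TTheory GRing.Theory Num.Theory.
Local Open Scope ring_scope.

Set Implicit Arguments.
Unset Strict Implicit.
Unset Printing Implicit Defensive.

(* Dense ranking reverses the order of scores, so a slice is ranked consistently
   with [B k] as soon as its scores separate the ones of [B k] from the zeros;
   any rounding witness [Y] of [B k] (entries >= 1/2 exactly at the ones) does.
   It thus suffices to place, for each k, a rounding witness [Y_k] as the k-th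
   slice of a ComplEx model.  Slices realized by separate models of sizes [n_k]
   are put side by side in one model of size [sum_k n_k], the relation vector of
   slice k vanishing outside its own block of coordinates.  One slice costs
   either N coordinates, since [Y + i Y^T] is normal, hence unitarily
   diagonalizable, with real part [Y]; or [2 rank Y] coordinates, two for each
   rank-one term of [Y]. *)

Lemma lt_dense_rank (R : realType) (N : nat) (S : 'M[R]_N) i j i' j' :
  S i' j' < S i j -> (dense_rank S i j < dense_rank S i' j')%N.
Proof.
move=> lt_S; rewrite /dense_rank ltnS.
set above_ij := [seq _ | _ <- _ & _]; set above_ij' := [seq _ | _ <- _ & _].
apply: (@uniq_leq_size _ (S i j :: undup above_ij)) => [|x].
  rewrite /= undup_uniq andbT mem_undup.
  by apply/mapP => -[p]; rewrite mem_filter => /andP[+ _] eq_p; rewrite -eq_p ltxx.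
rewrite inE !mem_undup => /orP[/eqP ->|/mapP[p]].
  by apply/mapP; exists (i, j); rewrite // mem_filter lt_S mem_enum inE.
rewrite mem_filter => /andP[lt_p p_enum] ->.
by apply/mapP; exists p; rewrite // mem_filter p_enum (lt_trans lt_S).
Qed.

Definition separates (R : realType) (N : nat) (X : 'M[R]_N) (B : 'M[bool]_N) :=
  forall i j i' j', B i j -> ~~ B i' j' -> X i' j' < X i j.

Lemma consistent_pi_tensor (R : realType) (N K : nat) (S : 'I_K -> 'M[R]_N)
    (B : 'I_K -> 'M[bool]_N) :
  (forall k, separates (S k) (B k)) -> consistent (pi_tensor S) B.
Proof. by move=> sepS k i j i' j' Bij Bij'; apply/lt_dense_rank/sepS. Qed.

Lemma round_mx_separates (R : realType) (N : nat) (Y : 'M[R]_N) :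
  separates Y (round_mx Y).
Proof.
move=> i j i' j'; rewrite !mxE -ltNge => Yij Yij'.
exact: lt_le_trans Yij' Yij.
Qed.

Lemma rrank_witness (R : realType) (m n : nat) (B : 'M[bool]_(m, n)) :
  exists Y : 'M[R]_(m, n), \rank Y = rrank R B /\ round_mx Y = B.
Proof. by rewrite /rrank; case: ex_minnP => k /asboolP[Y [<- <-]] _; exists Y. Qed.

Definition glue (T : Type) (s : nat) (f g : nat -> T) (l : nat) : T :=
  if (l < s)%N then f l else g (l - s)%N.

Definition nat_ext (T : Type) (x0 : T) (n : nat) (f : 'I_n -> T) (l : nat) : T :=
  if insub l is Some o then f o else x0.

Lemma nat_extE (T : Type) (x0 : T) (n : nat) (f : 'I_n -> T) (o : 'I_n) :
  nat_ext x0 f o = f o.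
Proof. by rewrite /nat_ext valK. Qed.

Section ComplexForms.
Variables (R : realType) (N : nat).
Local Notation C := R[i].

Definition complex_form (s : nat) (a : 'I_N -> nat -> C) (rho : nat -> C) : 'M[R]_N :=
  \matrix_(i, j) complex.Re (\sum_(0 <= l < s) a i l * rho l * conjc (a j l)).

Definition realizable (s : nat) (X : 'M[R]_N) : Prop :=
  exists a rho, complex_form s a rho = X.

Lemma complex_scoreE (K r : nat) (a : 'I_N -> nat -> C) (rho : nat -> nat -> C)
    (k : 'I_K) :
  complex_score (\matrix_(i, l) a i l : 'M_(N, r)) (\matrix_(k, l) rho k l) k
  = complex_form r a (rho k).
Proof.
apply/matrixP => i j; rewrite !mxE big_mkord.
by apply: congr1; apply: eq_bigr => l _; rewrite !mxE.
Qed.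

Lemma complex_form_glue s t a a' rho rho' :
  complex_form (s + t) (fun i => glue s (a i) (a' i)) (glue s rho rho')
  = complex_form s a rho + complex_form t a' rho'.
Proof.
apply/matrixP => i j; rewrite !mxE [in LHS](@big_cat_nat _ _ _ s) ?leq_addr //=.
rewrite raddfD /=; congr (complex.Re _ + complex.Re _).
  by apply: eq_big_nat => l /andP[_ lt_ls]; rewrite /glue lt_ls.
rewrite -{1}[s]add0n big_addn addKn.
by apply: eq_bigr => l _; rewrite /glue ltnNge leq_addl addnK.
Qed.

Lemma complex_form0r s a : complex_form s a (fun=> 0) = 0.
Proof.
by apply/matrixP => i j; rewrite !mxE big1 // => l _; rewrite mulr0 mul0r.
Qed.

Lemma realizable0 s : realizable s 0.
Proof. by exists (fun _ _ => 0), (fun=> 0); rewrite complex_form0r. Qed.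

Lemma realizableD s X t Y :
  realizable s X -> realizable t Y -> realizable (s + t) (X + Y).
Proof.
move=> [a [rho <-]] [a' [rho' <-]].
by exists (fun i => glue s (a i) (a' i)), (glue s rho rho'); rewrite complex_form_glue.
Qed.

(* [Re ((u_i + i v_i) (-1 + i)/2 (u_j - i v_j)) + (u_i + v_i) (u_j + v_j)/2 = u_i v_j]. *)
Lemma realizable_rank_one (u : 'cV[R]_N) (v : 'rV[R]_N) : realizable 2 (u *m v).
Proof.
exists (fun i l => if l == 0%N then Complex (u i 0) (v 0 i)
                   else Complex (u i 0 + v 0 i) 0).
exists (fun l => if l == 0%N then Complex (-1/2) (1/2) else Complex (1/2) 0).
apply/matrixP => i j; rewrite !mxE big_ord1 big_nat_recr //= big_nat1 raddfD /=.
by field.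
Qed.

Lemma realizable_mulmx p (U : 'M[R]_(N, p)) (V : 'M[R]_(p, N)) :
  realizable (2 * p) (U *m V).
Proof.
have -> : U *m V = \sum_(t < p) col t U *m row t V.
  apply/matrixP => i j; rewrite !mxE summxE.
  by apply: eq_bigr => t _; rewrite !mxE big_ord1 !mxE.
have -> : (2 * p = \sum_(t < p) 2)%N by rewrite sum_nat_const card_ord mulnC.
apply: (big_ind2 realizable (realizable0 0) realizableD) => t _.
exact: realizable_rank_one.
Qed.

Lemma realizable_rank X : realizable (2 * \rank X) X.
Proof. by rewrite -{2}(mulmx_base X); apply: realizable_mulmx. Qed.

Definition normal_lift (X : 'M[R]_N) : 'M[C]_N :=
  \matrix_(i, j) Complex (X i j) (X j i).

Lemma normal_lift_normal X : normal_lift X \is normalmx.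
Proof.
apply/normalmxP/matrixP => i j; rewrite !mxE; apply: eq_bigr => l _.
by rewrite !mxE; apply/eqP; rewrite eq_complex /=; apply/andP; split; apply/eqP; ring.
Qed.

Lemma realizable_full X : realizable N X.
Proof.
have := orthomx_spectralP (normal_lift_normal X).
rewrite invmx_unitary ?spectral_unitarymx // => lift_spectral.
set P := spectralmx _ in lift_spectral; set d := spectral_diag _ in lift_spectral.
exists (fun i => nat_ext 0 (fun o => conjc (P o i))), (nat_ext 0 (d 0)).
apply/matrixP => i j.
have -> : X i j = complex.Re (normal_lift X i j) by rewrite mxE.
rewrite lift_spectral !mxE big_mkord; congr complex.Re; apply: eq_bigr => o _.
by rewrite !nat_extE mul_mx_diag !mxE conjcK.
Qed.

Lemma realizable_stack (n : nat -> nat) (X : nat -> 'M[R]_N) m :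
  (forall k, realizable (n k) (X k)) ->
  exists a rho, forall k,
    complex_form (\sum_(k' < m) n k') a (rho k) = if (k < m)%N then X k else 0.
Proof.
move=> realX; elim: m => [|m [a [rho IH]]].
  by exists (fun _ _ => 0), (fun _ _ => 0) => k; rewrite big_ord0 complex_form0r.
have [b [beta form_Xm]] := realX m; set s := (\sum_(k' < m) n k')%N.
exists (fun i => glue s (a i) (b i)).
exists (fun k => glue s (rho k) (if k == m then beta else fun=> 0)) => k.
rewrite big_ord_recr /= complex_form_glue IH ltnS.
have [_|_|->] := ltngtP k m; last by rewrite add0r form_Xm.
all: by rewrite complex_form0r addr0.
Qed.

Lemma realizable_slices (K r : nat) (n : 'I_K -> nat) (X : 'I_K -> 'M[R]_N) :
  (forall k, realizable (n k) (X k)) -> (\sum_(k < K) n k <= r)%N ->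
  exists (A : 'M[C]_(N, r)) (Rm : 'M[C]_(K, r)), forall k, complex_score A Rm k = X k.
Proof.
move=> realX sum_le_r.
have realX' k : realizable (nat_ext 0%N n k) (nat_ext 0 X k).
  by rewrite /nat_ext; case: insub => [o|]; [apply: realX | apply: realizable0].
have [a [rho stack]] := realizable_stack K realX'.
set s := (\sum_(k < K) _)%N in stack.
have s_le_r : (s <= r)%N.
  by rewrite /s (eq_bigr _ (fun k _ => nat_extE 0%N n k)).
pose a' i := glue s (a i) (fun=> 0); pose rho' k := glue s (rho k) (fun=> 0).
exists (\matrix_(i, l) a' i l), (\matrix_(k, l) rho' k l) => k.
rewrite complex_scoreE -(subnKC s_le_r) complex_form_glue complex_form0r addr0.
by rewrite stack ltn_ord nat_extE.
Qed.

End ComplexForms.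

Theorem theorem12 (R : realType) (N K : nat) (hN : (2 <= N)%N) (hK : (1 <= K)%N)
  (B : 'I_K -> 'M[bool]_N) (r : nat) (hr : (0 < r)%N)
  (hrk : (minn (K * N) (2 * \sum_(k < K) rrank R (B k)) <= r)%N) :
  exists (A : 'M[R[i]]_(N, r)) (Rm : 'M[R[i]]_(K, r)),
    consistent (pi_tensor (complex_score A Rm)) B.
Proof.
have [Y witY] := choice (fun k => rrank_witness R (B k)).
have [A [Rm scoreY]] : exists (A : 'M[R[i]]_(N, r)) (Rm : 'M[R[i]]_(K, r)),
    forall k, complex_score A Rm k = Y k.
  move: hrk; rewrite geq_min => /orP[KN_le_r|rrank_le_r].
    apply: realizable_slices (fun k => realizable_full (Y k)) _.
    by rewrite sum_nat_const card_ord.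
  apply: realizable_slices (fun k => realizable_rank (Y k)) _.
  by rewrite -big_distrr (eq_bigr _ (fun k _ => (witY k).1)).
exists A, Rm; apply: consistent_pi_tensor => k.
by rewrite scoreY -(witY k).2; apply: round_mx_separates.
Qed.
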